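(* Let $k$ be an infinite field of characteristic $0$, $X_1\subseteq X_2$, $Y_1\subseteq Y_2$ finite sets, $W_i=W(X_i,Y_i)=(L(X_i),A(X_i)Y_i)$ ($i=1,2$), and $H$ a representation. If $(T_1,T_2)$ with $T_1\subseteq L(X_1)$, $T_2\subseteq A(X_1)Y_1$ is $H$-closed in $W_1$, then $(T_1,T_2)=(T_1,T_2)''_{W_2,H}\cap W_1$, i.e. if $(T_1,T_2)''_{W_2,H}=(S_1,S_2)$ then $T_1=S_1\cap L(X_1)$ and $T_2=S_2\cap A(X_1)Y_1$.
   Context: A representation $H=(L,V)$ is a Lie algebra $L$ over $k$ with an $L$-module $V$; homomorphisms $(\varphi,\psi)$: Lie homomorphism $\varphi$, linear $\psi$, $\varphi(l)\circ\psi(v)=\psi(l\circ v)$. $L(X)$ free Lie algebra, $A(X)$ free associative algebra with unit, $A(X)Y$ free $A(X)$-module with basis $Y$; $W_1\subseteq W_2$ naturally. For $W=W(X,Y)$ and $S_1\subseteq L(X)$, $S_2\subseteq A(X)Y$: $(S_1,S_2)'_{W,H}$ is the set of homomorphisms $(\varphi,\psi):W\to H$ with $S_1\subseteq\ker\varphi$, $S_2\subseteq\ker\psi$, $(S_1,S_2)''_{W,H}$ is the pair (intersection of these $\ker\varphi$, intersection of these $\ker\psi$), and $(S_1,S_2)$ is $H$-closed in $W$ if $(S_1,S_2)''_{W,H}=(S_1,S_2)$. *)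

From HB Require Import structures.
From mathcomp Require Import all_boot all_order all_algebra.
From mathcomp Require Import finmap.
From mathcomp Require Import monalg.

Set Implicit Arguments.
Unset Strict Implicit.
Unset Printing Implicit Defensive.

Import GRing.Theory.
Local Open Scope ring_scope.

Section Defs.
Variable k : fieldType.

Record lie_rep (L V : lmodType k) (br : L -> L -> L) (act : L -> V -> V) : Prop := {
  br_linl : forall c a b d, br (c *: a + b) d = c *: br a d + br b d;
  br_linr : forall c a b d, br d (c *: a + b) = c *: br d a + br d b;
  br_alt  : forall a, br a a = 0;
  br_jacobi : forall a b c, br a (br b c) + br b (br c a) + br c (br a b) = 0;
  act_linl : forall c a b v, act (c *: a + b) v = c *: act a v + act b v;
  act_linr : forall c a u v, act a (c *: u + v) = c *: act a u + act a v;
  act_br  : forall a b v, act (br a b) v = act a (act b v) - act b (act a v)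
}.

Variables (Xt Yt : finType).

(* A = free associative unital algebra on all letters of Xt (noncommutative
   polynomials); A(X) is the subset of polynomials only involving letters in X. *)
Definition FA := {malg k[{fmonom Xt}]}.

Definition inA (X : {set Xt}) (a : FA) : Prop :=
  forall m : {fmonom Xt}, m \in msupp a -> all (fun x => x \in X) (fmonom_val m).

Definition gen (x : Xt) : FA := << fmu x >>.

Definition comm (a b : FA) : FA := a * b - b * a.

(* L(X): the Lie subalgebra of A(X) generated by X (= the free Lie algebra on X). *)
Inductive inL (X : {set Xt}) : FA -> Prop :=
| inL_gen x : x \in X -> inL X (gen x)
| inL_zero : inL X 0
| inL_lin c a b : inL X a -> inL X b -> inL X (c *: a + b)
| inL_comm a b : inL X a -> inL X b -> inL X (comm a b).

(* A(X)Y: free A(X)-module with basis Y, element sum_y a_y y represented by y |-> a_y *)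
Definition FM := {ffun Yt -> FA}.

Definition inM (X : {set Xt}) (Y : {set Yt}) (v : FM) : Prop :=
  forall y, (y \in Y -> inA X (v y)) /\ (y \notin Y -> v y = 0).

Definition lact (l : FA) (v : FM) : FM := [ffun y => l * v y].

Variables (L V : lmodType k) (br : L -> L -> L) (act : L -> V -> V).

(* homomorphisms W(X,Y) -> H; phi and psi only matter on L(X), A(X)Y *)
Definition is_hom (X : {set Xt}) (Y : {set Yt}) (phi : FA -> L) (psi : FM -> V) : Prop :=
  [/\ (forall c a b, inL X a -> inL X b -> phi (c *: a + b) = c *: phi a + phi b),
      (forall a b, inL X a -> inL X b -> phi (comm a b) = br (phi a) (phi b)),
      (forall c u v, inM X Y u -> inM X Y v -> psi (c *: u + v) = c *: psi u + psi v)
    & (forall l v, inL X l -> inM X Y v -> act (phi l) (psi v) = psi (lact l v))].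

Definition prime1 X Y (S1 : FA -> Prop) (S2 : FM -> Prop) phi psi : Prop :=
  is_hom X Y phi psi /\ (forall s, S1 s -> phi s = 0) /\ (forall s, S2 s -> psi s = 0).

Definition dprime_L X Y (S1 : FA -> Prop) (S2 : FM -> Prop) (a : FA) : Prop :=
  inL X a /\ forall phi psi, prime1 X Y S1 S2 phi psi -> phi a = 0.

Definition dprime_M X Y (S1 : FA -> Prop) (S2 : FM -> Prop) (v : FM) : Prop :=
  inM X Y v /\ forall phi psi, prime1 X Y S1 S2 phi psi -> psi v = 0.

Definition H_closed X Y (S1 : FA -> Prop) (S2 : FM -> Prop) : Prop :=
  (forall a, dprime_L X Y S1 S2 a <-> S1 a) /\ (forall v, dprime_M X Y S1 S2 v <-> S2 v).

End Defs.

(* W1 is a retract of W2: the map killing every monomial that uses a letter outside X1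
   and every coordinate outside Y1 is a morphism W2 -> W1 that is the identity on W1.
   Composing with it turns every homomorphism W1 -> H vanishing on (T1,T2) into one
   W2 -> H with the same property, so (T1,T2)''_{W2,H} cut down to W1 lies in
   (T1,T2)''_{W1,H} = (T1,T2).  Neither the characteristic nor the size of k, nor the
   Lie structure of H, plays a role. *)

From HB Require Import structures.
From mathcomp Require Import all_boot all_order all_algebra.
From mathcomp Require Import finmap monalg.

Set Implicit Arguments.
Unset Strict Implicit.
Unset Printing Implicit Defensive.

Import GRing.Theory.
Local Open Scope ring_scope.

Lemma ffun_cond_map_linear (R : pzRingType) (V : lmodType R) (I : finType) (P : pred I)
    (f : V -> V) : (forall c a b, f (c *: a + b) = c *: f a + f b) ->
  forall c (u v : {ffun I -> V}),
  [ffun i => if P i then f ((c *: u + v) i) else 0] =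
  c *: [ffun i => if P i then f (u i) else 0] + [ffun i => if P i then f (v i) else 0].
Proof.
move=> f_lin c u v; apply/ffunP => i; rewrite !ffunE.
by case: (P i); rewrite ?f_lin // scaler0 addr0.
Qed.

Lemma ffun_cond_map_mul (R : pzRingType) (I : finType) (P : pred I) (f : R -> R) :
    {morph f : a b / a * b} ->
  forall l (v : {ffun I -> R}),
  [ffun i => if P i then f ([ffun i => l * v i] i) else 0] =
  [ffun i => f l * [ffun i => if P i then f (v i) else 0] i].
Proof.
move=> fM l v; apply/ffunP => i; rewrite !ffunE.
by case: (P i); rewrite ?fM // mulr0.
Qed.

Section Projection.
Variables (k : fieldType) (Xt Yt : finType).
Implicit Types (X : {set Xt}) (Y : {set Yt}) (a b l : FA k Xt) (u v : FM k Xt Yt).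

Definition restr_monom X (m : {fmonom Xt}) : FA k Xt :=
  if all (fun x => x \in X) (fmonom_val m) then << m >> else 0.

Lemma malgUM (m1 m2 : {fmonom Xt}) :
  (<< m1 >> : FA k Xt) * << m2 >> = << mmul m1 m2 >>.
Proof. by rewrite malgM_def fgmulUU mulr1. Qed.

Lemma restr_monom_multiplicative X : mmorphism (restr_monom X).
Proof.
split; last by rewrite /restr_monom fm1.
move=> m1 m2; rewrite /restr_monom fmM all_cat.
by case: (all _ m1); case: (all _ m2); rewrite /= ?mulr0 ?mul0r ?malgUM.
Qed.

HB.instance Definition _ X :=
  isMultiplicative.Build _ _ (restr_monom X) (restr_monom_multiplicative X).

Lemma restr_monom_commC X (c : k) m : c%:MP * restr_monom X m = restr_monom X m * c%:MP.
Proof.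
rewrite /restr_monom; case: ifP => _; last by rewrite mulr0 mul0r.
by rewrite !malgM_def !fgmulUU mulm1 mul1m mulr1 mul1r.
Qed.

Definition projA X (a : FA k Xt) : FA k Xt := mmap (@malgC _ k) (restr_monom X) a.

Lemma projA_lin X c a b : projA X (c *: a + b) = c *: projA X a + projA X b.
Proof. by rewrite /projA mmapD mmapZ /= mul_malgC. Qed.

Lemma projAM X a b : projA X (a * b) = projA X a * projA X b.
Proof.
have [mul _] := @commr_mmap_is_multiplicative _ _ _ (@malgC _ k) (restr_monom X)
  (fun g _ m => restr_monom_commC X _ m).
exact: mul.
Qed.

Lemma projA_gen X x : projA X (gen k x) = if x \in X then gen k x else 0.
Proof.
rewrite /projA /gen mmapU /restr_monom fmU /= andbT mpolyC1E mul1r.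
by case: (x \in X).
Qed.

Lemma projA_comm X a b : projA X (comm a b) = comm (projA X a) (projA X b).
Proof. by rewrite /comm /projA mmapB -!/(projA _ _) !projAM. Qed.

Lemma inA0 X : inA X (0 : FA k Xt).
Proof. by move=> m; rewrite msupp0. Qed.

Lemma inAD X a b : inA X a -> inA X b -> inA X (a + b).
Proof.
move=> Ha Hb m /(fsubsetP (msuppD_le _ _)); rewrite in_fsetU.
by case/orP; [apply: Ha | apply: Hb].
Qed.

Lemma inA_subset X1 X2 a : X1 \subset X2 -> inA X1 a -> inA X2 a.
Proof.
move=> sX Ha m /Ha /allP Hm; apply/allP => x /Hm; exact: (subsetP sX).
Qed.

Lemma projA_inA X a : inA X (projA X a).
Proof.
rewrite /projA mmapE; apply: (big_ind (inA X)); [exact: inA0 | exact: inAD |].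
move=> m _; rewrite /restr_monom; case: ifP => Hm; last by rewrite mulr0; apply: inA0.
rewrite malgM_def fgmulUU mulr1 mul1m.
by move=> m' /(fsubsetP msuppU_le); rewrite inE => /eqP ->.
Qed.

Lemma projA_id X a : inA X a -> projA X a = a.
Proof.
move=> Ha; rewrite /projA mmapE [RHS]monalgE big_seq [RHS]big_seq.
apply: eq_bigr => m /Ha Hm.
by rewrite /restr_monom Hm malgM_def fgmulUU mulr1 mul1m.
Qed.

Lemma inL_subset X1 X2 a : X1 \subset X2 -> inL X1 a -> inL X2 a.
Proof.
move=> sX; elim=> [x Hx | | c ? ? _ ? _ ? | ? ? _ ? _ ?].
- exact/inL_gen/(subsetP sX).
- exact: inL_zero.
- exact: inL_lin.
- exact: inL_comm.
Qed.

Lemma projA_inL X X' a : inL X' a -> inL X (projA X a).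
Proof.
elim=> [x _ | | c ? ? _ ? _ ? | ? ? _ ? _ ?].
- by rewrite projA_gen; case: ifP => Hx; [apply: inL_gen | apply: inL_zero].
- by rewrite /projA mmap0; apply: inL_zero.
- by rewrite projA_lin; apply: inL_lin.
- by rewrite projA_comm; apply: inL_comm.
Qed.

Lemma projA_idL X a : inL X a -> projA X a = a.
Proof.
elim=> [x Hx | | c ? ? _ IHa _ IHb | ? ? _ IHa _ IHb].
- by rewrite projA_gen Hx.
- by rewrite /projA mmap0.
- by rewrite projA_lin IHa IHb.
- by rewrite projA_comm IHa IHb.
Qed.

Definition projM_def X Y v : FM k Xt Yt :=
  [ffun y => if y \in Y then projA X (v y) else 0].
(* Locked: unfolding it under ffun application makes rewriting diverge. *)
Fact projM_key : unit. Proof. exact: tt. Qed.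
Definition projM := locked_with projM_key projM_def.
Canonical projM_unlockable := [unlockable of projM].

Lemma projME X Y v y : projM X Y v y = if y \in Y then projA X (v y) else 0.
Proof. by rewrite unlock ffunE. Qed.

Lemma projM_lin X Y c u v : projM X Y (c *: u + v) = c *: projM X Y u + projM X Y v.
Proof. by rewrite unlock; apply: ffun_cond_map_linear; apply: projA_lin. Qed.

Lemma projM_lact X Y l v : projM X Y (lact l v) = lact (projA X l) (projM X Y v).
Proof. by rewrite /lact unlock; apply: ffun_cond_map_mul; apply: projAM. Qed.

Lemma projM_inM X Y v : inM X Y (projM X Y v).
Proof.
move=> y; rewrite projME; split=> [-> | /negbTE -> //]; exact: projA_inA.
Qed.

Lemma projM_id X Y v : inM X Y v -> projM X Y v = v.
Proof.
move=> Hv; apply/ffunP => y; rewrite projME.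
have [Hy | Hy] := boolP (y \in Y); first by rewrite projA_id //; apply: (Hv y).1.
by rewrite (Hv y).2.
Qed.

Lemma inM_subset X1 X2 Y1 Y2 v : X1 \subset X2 -> Y1 \subset Y2 ->
  inM X1 Y1 v -> inM X2 Y2 v.
Proof.
move=> sX sY Hv y; split=> Hy.
- have [/(Hv y).1 /(inA_subset sX) // | /(Hv y).2 ->] := boolP (y \in Y1).
  exact: inA0.
- by apply: (Hv y).2; apply: contra Hy; apply: (subsetP sY).
Qed.

End Projection.

Section Retract.
Variables (k : fieldType) (Xt Yt : finType) (L V : lmodType k).
Variables (br : L -> L -> L) (act : L -> V -> V).
Variables (X1 X2 : {set Xt}) (Y1 Y2 : {set Yt}).
Variables (T1 : FA k Xt -> Prop) (T2 : FM k Xt Yt -> Prop).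
Hypotheses (sT1 : forall a, T1 a -> inL X1 a) (sT2 : forall v, T2 v -> inM X1 Y1 v).

Lemma is_hom_comp_proj phi psi : is_hom br act X1 Y1 phi psi ->
  is_hom br act X2 Y2 (phi \o projA X1) (psi \o projM X1 Y1).
Proof.
case=> phi_lin phi_comm psi_lin phi_act; split=> /=.
- move=> c a b Ha Hb.
  by rewrite projA_lin (phi_lin _ _ _ (projA_inL X1 Ha) (projA_inL X1 Hb)).
- move=> a b Ha Hb.
  by rewrite projA_comm (phi_comm _ _ (projA_inL X1 Ha) (projA_inL X1 Hb)).
- move=> c u v _ _.
  by rewrite projM_lin (psi_lin _ _ _ (projM_inM X1 Y1 u) (projM_inM X1 Y1 v)).
- move=> l v Hl _.
  by rewrite projM_lact (phi_act _ _ (projA_inL X1 Hl) (projM_inM X1 Y1 v)).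
Qed.

Lemma prime1_comp_proj phi psi : prime1 br act X1 Y1 T1 T2 phi psi ->
  prime1 br act X2 Y2 T1 T2 (phi \o projA X1) (psi \o projM X1 Y1).
Proof.
case=> hom [phiT1 psiT2]; split; first exact: is_hom_comp_proj.
split=> s Ts /=.
- by rewrite projA_idL ?phiT1 //; apply: sT1.
- by rewrite projM_id ?psiT2 //; apply: sT2.
Qed.

Lemma dprime_L_restrict a : dprime_L br act X2 Y2 T1 T2 a -> inL X1 a ->
  dprime_L br act X1 Y1 T1 T2 a.
Proof.
move=> [_ kerT] Ha; split=> // phi psi /prime1_comp_proj /kerT /=.
by rewrite projA_idL.
Qed.

Lemma dprime_M_restrict v : dprime_M br act X2 Y2 T1 T2 v -> inM X1 Y1 v ->
  dprime_M br act X1 Y1 T1 T2 v.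
Proof.
move=> [_ kerT] Hv; split=> // phi psi /prime1_comp_proj /kerT /=.
by rewrite projM_id.
Qed.

End Retract.

Lemma dprime_L_of (k : fieldType) (Xt Yt : finType) (L V : lmodType k)
  (br : L -> L -> L) (act : L -> V -> V) X Y S1 S2 (a : FA k Xt) :
  inL X a -> S1 a -> @dprime_L k Xt Yt L V br act X Y S1 S2 a.
Proof. by move=> Ha S1a; split=> // phi psi [_ [phiS1 _]]; apply: phiS1. Qed.

Lemma dprime_M_of (k : fieldType) (Xt Yt : finType) (L V : lmodType k)
  (br : L -> L -> L) (act : L -> V -> V) X Y S1 S2 (v : FM k Xt Yt) :
  inM X Y v -> S2 v -> @dprime_M k Xt Yt L V br act X Y S1 S2 v.
Proof. by move=> Hv S2v; split=> // phi psi [_ [_ psiS2]]; apply: psiS2. Qed.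

Theorem proposition3 (k : fieldType)
  (char0 : [pchar k] =i pred0)
  (k_infinite : ~ exists s : seq k, forall x : k, x \in s)
  (Xt Yt : finType) (X1 X2 : {set Xt}) (Y1 Y2 : {set Yt})
  (sX : X1 \subset X2) (sY : Y1 \subset Y2)
  (L V : lmodType k) (br : L -> L -> L) (act : L -> V -> V)
  (HH : lie_rep br act)
  (T1 : FA k Xt -> Prop) (T2 : FM k Xt Yt -> Prop)
  (sT1 : forall a, T1 a -> inL X1 a)
  (sT2 : forall v, T2 v -> inM X1 Y1 v)
  (closed1 : H_closed br act X1 Y1 T1 T2) :
  (forall a, T1 a <-> (dprime_L br act X2 Y2 T1 T2 a /\ inL X1 a)) /\
  (forall v, T2 v <-> (dprime_M br act X2 Y2 T1 T2 v /\ inM X1 Y1 v)).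
Proof.
have [closedL closedM] := closed1.
split=> [a | v]; split.
- move=> T1a; have Ha := sT1 _ T1a.
  by split=> //; apply: dprime_L_of (inL_subset sX Ha) T1a.
- by case=> d2 Ha; apply/closedL; apply: dprime_L_restrict d2 Ha.
- move=> T2v; have Hv := sT2 _ T2v.
  by split=> //; apply: dprime_M_of (inM_subset sX sY Hv) T2v.
- by case=> d2 Hv; apply/closedM; apply: dprime_M_restrict d2 Hv.
Qed.
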